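(* Let $G$ be a countable discrete amenable group and $(X,d)$ a compact metric space. Let $\sigma$ be the full $G$-shift on $X^G$, $\sigma^h((x_g)_{g\in G})=(x_{gh})_{g\in G}$, and equip $X^G$ with the metric $\boldsymbol d(x,y)=\sum_{g\in G}\alpha_g\,d(x_g,y_g)$, where $\alpha_g\in(0,\infty)$, $\alpha_{1_G}=1$ and $\sum_{g\in G}\alpha_g<\infty$. Assume the $G$-system $(X^G,\sigma)$ with metric $\boldsymbol d$ satisfies Condition (C). Then $$\overline{\mathrm{mdim}}_{\mathrm M}(X^G,G,\boldsymbol d)=\overline{\dim}_{\mathrm B}(X,d),\qquad\underline{\mathrm{mdim}}_{\mathrm M}(X^G,G,\boldsymbol d)=\underline{\dim}_{\mathrm B}(X,d).$$
   Context: Upper/lower Minkowski (box) dimension: $\overline{\dim}_{\mathrm B}(X,d)=\limsup_{\varepsilon\to0}\frac{\log N(\varepsilon)}{|\log\varepsilon|}$, $\underline{\dim}_{\mathrm B}(X,d)=\liminf_{\varepsilon\to0}\frac{\log N(\varepsilon)}{|\log\varepsilon|}$, where $N(\varepsilon)$ is the maximal cardinality of a subset of $X$ whose distinct points are at $d$-distance $>\varepsilon$. Metric mean dimension of a $G$-system $(Z,G)$ with metric $\rho$: with a Følner sequence $(F_n)$, $\rho_F(x,y)=\max_{g\in F}\rho(gx,gy)$ and $s_F(\rho,\varepsilon,Z)$ the maximal cardinality of a subset of $Z$ whose distinct points have $\rho_F$-distance $>\varepsilon$, $\overline{\mathrm{mdim}}_{\mathrm M}(Z,G,\rho)=\limsup_{\varepsilon\to0}\frac{1}{|\log\varepsilon|}\limsup_n\frac1{|F_n|}\log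 s_{F_n}(\rho,\varepsilon,Z)$ and $\underline{\mathrm{mdim}}_{\mathrm M}$ with $\liminf_{\varepsilon\to0}$ (independent of the Følner sequence). Condition (C) for a $G$-system $(Z,G)$ with metric $\rho$: let $E(Z,G)$ be the set of ergodic $G$-invariant Borel probability measures; for a finite measurable partition $\mathcal P$ let $\partial\mathcal P=\bigcup_{A\in\mathcal P}\partial A$, $\mathrm{diam}(\mathcal P)=\max_{A\in\mathcal P}\mathrm{diam}(A)$, $U_r(A)=\{x\in A:\exists y\in Z\setminus A,\ \rho(x,y)<r\}$, $U_r(\mathcal P)=\bigcup_{A\in\mathcal P}U_r(A)$; for $\mu\in E(Z,G)$ and $\gamma>0$ let $r_{\mu,\gamma}=\sup\{r>0:\exists$ finite measurable partition $\mathcal P$ with $\mu(\partial\mathcal P)=0$, $\mathrm{diam}(\mathcal P)<\gamma$, $\mu(U_r(\mathcal P))<\gamma\}$ and $r_\gamma=\inf_{\mu\in E(Z,G)}r_{\mu,\gamma}$. Condition (C) requires $r_\gamma>0$ for every $\gamma>0$ and $\lim_{\gamma\to0}\frac{\log r_\gamma}{\log\gamma}=1$. *)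

From HB Require Import structures.
From mathcomp Require Import all_boot all_order all_algebra.
From mathcomp Require Import all_classical all_reals all_analysis.
Set Implicit Arguments. Unset Strict Implicit. Unset Printing Implicit Defensive.
Import Order.TTheory GRing.Theory Num.Theory.
Import numFieldNormedType.Exports.
Local Open Scope classical_set_scope.
Local Open Scope ring_scope.

Section MetricNotions.
Context {R : realType} {Z : Type} (rho : Z -> Z -> R).

Definition is_metric : Prop :=
  (forall x y, 0 <= rho x y) /\ (forall x y, rho x y = 0 <-> x = y) /\
  (forall x y, rho x y = rho y x) /\
  (forall x y z, rho x z <= rho x y + rho y z).

Definition dball (x : Z) (r : R) : set Z := [set y | rho x y < r].

Definition dopen : set (set Z) :=
  [set A | forall x, A x -> exists2 r, 0 < r & dball x r `<=` A].

Definition dcompact : Prop :=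
  forall (I : Type) (U : I -> set Z), (forall i, dopen (U i)) ->
    \bigcup_i U i = setT ->
    exists n (f : 'I_n -> I), \bigcup_k U (f k) = setT.

Definition dclosure (A : set Z) : set Z :=
  [set x | forall r, 0 < r -> exists2 y, A y & rho x y < r].
Definition dinterior (A : set Z) : set Z :=
  [set x | exists2 r, 0 < r & dball x r `<=` A].
Definition dboundary (A : set Z) : set Z := dclosure A `\` dinterior A.

Definition ddiam (A : set Z) : \bar R :=
  ereal_sup [set (rho xy.1 xy.2)%:E | xy in A `*` A].

Definition Ur (r : R) (A : set Z) : set Z :=
  [set x | A x /\ exists2 y, ~ A y & rho x y < r].

Definition sepnum (eps : R) : \bar R :=
  ereal_sup [set (n%:R)%:E | n in
    [set n : nat | exists f : 'I_n -> Z, forall i j, i != j -> eps < rho (f i) (f j)]].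
End MetricNotions.

Definition elog {R : realType} (x : \bar R) : \bar R :=
  match x with
  | r%:E => (ln r)%:E
  | +oo%E => +oo%E
  | -oo%E => -oo%E
  end.

Section BoxDim.
Context {R : realType} {Z : Type} (rho : Z -> Z -> R).
Local Open Scope ereal_scope.
Definition box_ratio (eps : R) : \bar R :=
  ((`|ln eps|)^-1)%:E * elog (sepnum rho eps).
Definition upper_box_dim : \bar R := limf_esup box_ratio (0:R)^'+.
Definition lower_box_dim : \bar R := limf_einf box_ratio (0:R)^'+.
End BoxDim.

Section Folner.
Context {R : realType} {G : countType} (mul : G -> G -> G).

(* |g F \triangle F| for a finite set F given as a duplicate-free list *)
Definition symdiff_card (g : G) (s : seq G) : nat :=
  count (fun x => x \notin s) (map (mul g) s) +
  count (fun x => x \notin map (mul g) s) s.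

Definition folner (F : nat -> seq G) : Prop :=
  (forall n, uniq (F n) /\ F n != [::]) /\
  forall g, (fun n => ((symdiff_card g (F n))%:R / (size (F n))%:R : R)) @ \oo
              --> (0 : R).

(* a countable discrete group is amenable iff it admits a Følner sequence *)
Definition amenable : Prop := exists F, folner F.
End Folner.

Section MeanDim.
Context {R : realType} {G : countType} {Z : Type}
  (act : G -> Z -> Z) (rho : Z -> Z -> R).
Local Open Scope ereal_scope.

Definition rhoF (s : seq G) (x y : Z) : R :=
  (\big[Num.max/0]_(g <- s) rho (act g x) (act g y))%R.

Definition mdim_ratio (F : nat -> seq G) (eps : R) : \bar R :=
  ((`|ln eps|)^-1)%:E *
  limn_esup (fun n => (((size (F n))%:R)^-1)%:E * elog (sepnum (rhoF (F n)) eps)).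

Definition upper_mdimM (F : nat -> seq G) : \bar R :=
  limf_esup (mdim_ratio F) (0:R)^'+.
Definition lower_mdimM (F : nat -> seq G) : \bar R :=
  limf_einf (mdim_ratio F) (0:R)^'+.
End MeanDim.

Section ConditionC.
Context {R : realType} {G : Type} {Z : pointedType}
  (act : G -> Z -> Z) (rho : Z -> Z -> R).
Local Open Scope ereal_scope.

Definition BorelZ := g_sigma_algebraType (dopen rho).

Definition invariant_measure (mu : probability BorelZ R) : Prop :=
  forall (h : G) (A : set BorelZ), measurable A -> mu (act h @^-1` A) = mu A.

Definition ergodic_measure (mu : probability BorelZ R) : Prop :=
  invariant_measure mu /\
  forall A : set BorelZ, measurable A -> (forall h, act h @^-1` A = A) ->
    mu A = 0 \/ mu A = 1.

Definition meas_partition n (P : 'I_n -> set BorelZ) : Prop :=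
  (forall i, measurable (P i)) /\
  (forall i j, i != j -> P i `&` P j = set0) /\
  \bigcup_i P i = setT.

Definition r_mu (mu : probability BorelZ R) (gamma : R) : \bar R :=
  ereal_sup [set r%:E | r in [set r : R | (0 < r)%R /\
    exists n (P : 'I_n -> set BorelZ), meas_partition P /\
      mu (\bigcup_i dboundary rho (P i)) = 0 /\
      (forall i, ddiam rho (P i) < gamma%:E) /\
      mu (\bigcup_i Ur rho r (P i)) < gamma%:E]].

Definition r_gamma (gamma : R) : \bar R :=
  ereal_inf [set r_mu mu gamma | mu in [set mu | ergodic_measure mu]].

Definition condition_C : Prop :=
  (forall gamma : R, (0 < gamma)%R -> 0 < r_gamma gamma) /\
  (forall e : R, (0 < e)%R -> exists2 delta : R, (0 < delta)%R &
     forall gamma : R, (0 < gamma < delta)%R ->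
       exists r : R, r_gamma gamma = r%:E /\ (`| ln r / ln gamma - 1 | < e)%R).
End ConditionC.

Definition gshift {G X : Type} (mul : G -> G -> G) (h : G) (x : G -> X) : G -> X :=
  fun g => x (mul g h).

Definition prod_metric {R : realType} {G : choiceType} {X : Type} (alpha : G -> R)
  (d : X -> X -> R) (x y : G -> X) : R :=
  fine (\esum_(g in [set: G]) (alpha g * d (x g) (y g))%:E).

From HB Require Import structures.
From mathcomp Require Import all_boot all_order all_algebra.
From mathcomp Require Import all_classical all_reals all_analysis.
From mathcomp Require Import ring lra.
Import Order.TTheory GRing.Theory Num.Theory.
Import numFieldNormedType.Exports.
Local Open Scope classical_set_scope.
Local Open Scope ring_scope.

(* Let N(e) be the maximal size of an e-separated subset of X.  For finite
   F in G, products over F of e-separated families of X are e-separated for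
   rho_F (the coordinate 1 has weight 1), so s_F(e) >= N(e)^|F|.  Conversely,
   pick a finite K in G carrying all the weight but e/(2D), where D bounds d:
   points whose coordinates on KF lie in the same cells of a (c e)-net, with
   c = 1/(4 sum alpha), are rho_F-close, so s_F(e) <= N(c e)^|KF|, and
   |KF| <= (1 + o(1)) |F| along a Folner sequence.  Hence
     ln N(e) / |ln e| <= mdim ratio at e <= ln N(c e) / |ln e|,
   and as |ln e| ~ |ln (c e)| when e -> 0, both limits agree with those of
   the box-dimension ratio. *)

Section LimfEsupEinf.
Context {R : realType} {T U : choiceType} {X : filteredType T} {Y : filteredType U}.
Local Open Scope ereal_scope.

Lemma limf_esup_comp (F : set_system X) {FF : Filter F}
    (f : Y -> \bar R) (h : X -> Y) :
  limf_esup (f \o h) F = limf_esup f (fmap h F).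
Proof.
apply/eqP; rewrite eq_le; apply/andP; split.
- apply: le_ereal_inf_tmp => _ [V FV <-]; apply: ge_ereal_inf.
  exists (ereal_sup ((f \o h) @` (h @^-1` V))); first by exists (h @^-1` V).
  by apply: ereal_sup_le => _ [x Vx <-]; exists (h x).
- apply: le_ereal_inf_tmp => _ [W FW <-]; apply: ge_ereal_inf.
  exists (ereal_sup (f @` (h @` W))); last by rewrite image_comp.
  by exists (h @` W) => //; rewrite /fmap /=; apply: filterS FW => x Wx; exists x.
Qed.

Lemma limf_einf_comp (F : set_system X) {FF : Filter F}
    (f : Y -> \bar R) (h : X -> Y) :
  limf_einf (f \o h) F = limf_einf f (fmap h F).
Proof. by rewrite /limf_einf -limf_esup_comp. Qed.

Lemma le_limf_esup {F : set_system X} {FF : Filter F} {f g : X -> \bar R} :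
  (\forall x \near F, f x <= g x) -> limf_esup f F <= limf_esup g F.
Proof.
move=> fg; apply: le_ereal_inf_tmp => _ [V FV <-]; apply: ge_ereal_inf.
pose W := V `&` [set x | f x <= g x].
exists (ereal_sup (f @` W)); first by exists W => //; apply: filterI.
apply: ge_ereal_sup => _ [x [Vx fgx] <-]; apply: le_trans fgx _.
by apply: ereal_sup_ubound; exists x.
Qed.

Lemma le_limf_einf {F : set_system X} {FF : Filter F} {f g : X -> \bar R} :
  (\forall x \near F, f x <= g x) -> limf_einf f F <= limf_einf g F.
Proof.
move=> fg; rewrite /limf_einf leeN2; apply: le_limf_esup.
by apply: filterS fg => x; rewrite leeN2.
Qed.

Lemma limf_esup_pZl (F : set_system X) (f : X -> \bar R) (r : R) :
  (0 < r)%R -> limf_esup (fun x => r%:E * f x) F = r%:E * limf_esup f F.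
Proof.
move=> r0; rewrite /limf_esup -ereal_inf_pZl // image_comp.
by congr ereal_inf; apply: eq_imagel => V _ /=; rewrite -ereal_sup_pZl // image_comp.
Qed.

Lemma limf_einf_pZl (F : set_system X) (f : X -> \bar R) (r : R) :
  (0 < r)%R -> limf_einf (fun x => r%:E * f x) F = r%:E * limf_einf f F.
Proof.
move=> r0; rewrite /limf_einf muleN -limf_esup_pZl //.
by congr (- limf_esup _ _); apply: funext => x; rewrite muleN.
Qed.

Lemma lee_mul1Dgt0 (x y : \bar R) :
  (forall e : R, (0 < e)%R -> x <= (1 + e)%:E * y) -> x <= y.
Proof.
move=> H; case: y H => [y||] H; last 2 first.
- by rewrite leey.
- by have := H 1%R ltr01; rewrite mulrNy gtr0_sg ?addr_gt0 // mul1e.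
case: x H => [x||] H; last 2 first.
- by have := H 1%R ltr01; rewrite -EFinM leNgt ltey.
- by rewrite leNye.
rewrite lee_fin; apply/ler_addgt0Pr => e e0.
have [y0|y0] := lerP y 0.
  by have := H 1%R ltr01; rewrite -EFinM lee_fin; lra.
by have := H (e / y)%R (divr_gt0 e0 y0); rewrite -EFinM lee_fin mulrDl mul1r divfK ?gt_eqF.
Qed.

End LimfEsupEinf.

Section RightOfZero.
Context {R : realType}.

Lemma at_right0P (P : set R) :
  (0:R)^'+ P <-> exists2 d : R, 0 < d & forall y, 0 < y < d -> P y.
Proof.
split.
- move=> /nbhs_ballP [e /= e0 He]; exists e => // y /andP[y0 ye]; apply: He => //.
  by rewrite /ball /= sub0r normrN gtr0_norm.
- move=> [e e0 He]; apply/nbhs_ballP; exists e => //= y.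
  rewrite /ball /= sub0r normrN => ye y0.
  by apply: He; rewrite y0 /= -(gtr0_norm y0).
Qed.

Lemma fmap_scale_right0 (c : R) : 0 < c -> fmap (fun x => c * x) (0:R)^'+ = (0:R)^'+.
Proof.
move=> c0; apply: funext => V; apply: propext; rewrite /fmap /= !at_right0P.
split=> -[d d0 Hd].
- exists (c * d) => [|y /andP[y0 yd]]; first exact: mulr_gt0.
  have := Hd (y / c); rewrite /preimage /= mulrCA divff ?gt_eqF // mulr1; apply.
  by rewrite divr_gt0 //= ltr_pdivrMr // mulrC.
- exists (d / c) => [|y /andP[y0 yd]]; first exact: divr_gt0.
  by apply: Hd; rewrite mulr_gt0 //= mulrC -ltr_pdivlMr.
Qed.

Lemma near0_inv_abs_ln_scale (c e : R) : 0 < c < 1 -> 0 < e ->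
  \forall x \near (0:R)^'+, x < 1 /\ `|ln x|^-1 <= (1 + e) * `|ln (c * x)|^-1.
Proof.
move=> /andP[c0 c1] e0; apply/at_right0P.
exists (Num.min 1 (expR (ln c / e))); first by rewrite lt_min ltr01 expR_gt0.
move=> x /andP[x0]; rewrite lt_min => /andP[x1 xE]; split => //.
have lnx : ln x < 0 by apply: ln_lt0; rewrite x0 x1.
have lnc : ln c < 0 by apply: ln_lt0; rewrite c0 c1.
have hx : e * ln x <= ln c.
  rewrite mulrC; apply: ltW; rewrite -ltr_pdivlMr //.
  by rewrite -(expRK (ln c / e)) ltr_ln // posrE expR_gt0.
rewrite lnM ?posrE // (ltr0_norm lnx) ltr0_norm; last by lra.
rewrite -[X in _ <= X](invf_div (- (ln c + ln x)) (1 + e)).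
rewrite lef_pV2 ?posrE ?oppr_gt0 ?divr_gt0 //; try lra.
by rewrite ler_pdivrMr; [nra|lra].
Qed.

End RightOfZero.

Section RescaledRatio.
Context {R : realType}.
Variables (a : R -> R) (b m : R -> \bar R) (c : R).
Hypothesis c01 : 0 < c < 1.
Hypothesis a_ge0 : forall x, 0 < x -> 0 <= a x.
Hypothesis bE : forall x, 0 < x -> b x = (`|ln x|^-1 * a x)%:E.
Hypothesis b_le_m : forall x, 0 < x < 1 -> (b x <= m x)%E.
Hypothesis m_le : forall x, 0 < x < 1 -> (m x <= (`|ln x|^-1 * a (c * x))%:E)%E.

Let c_gt0 : 0 < c. Proof. by case/andP: c01. Qed.

Lemma near0_le_rescaled (e : R) : 0 < e ->
  \forall x \near (0:R)^'+, (m x <= (1 + e)%:E * b (c * x))%E.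
Proof.
move=> e0; move: (near0_inv_abs_ln_scale _ _ c01 e0) (nbhs_right_gt (0:R)).
apply: filterS2 => x [x1 ln_scale] x0; rewrite bE ?mulr_gt0 // -EFinM.
apply: (le_trans (m_le x _)); first by rewrite x0.
by rewrite lee_fin mulrA ler_wpM2r // a_ge0 // mulr_gt0.
Qed.

Lemma near0_b_le_m : \forall x \near (0:R)^'+, (b x <= m x)%E.
Proof. by apply/at_right0P; exists 1 => //; exact: b_le_m. Qed.

Lemma limf_esup_rescaled : limf_esup m (0:R)^'+ = limf_esup b (0:R)^'+.
Proof.
apply/eqP; rewrite eq_le (le_limf_esup near0_b_le_m) andbT.
apply: lee_mul1Dgt0 => e e0.
rewrite -[in X in (_ <= X)%E](fmap_scale_right0 _ c_gt0) -limf_esup_comp.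
rewrite -limf_esup_pZl ?addr_gt0 //.
by apply: le_limf_esup; exact: near0_le_rescaled.
Qed.

Lemma limf_einf_rescaled : limf_einf m (0:R)^'+ = limf_einf b (0:R)^'+.
Proof.
apply/eqP; rewrite eq_le (le_limf_einf near0_b_le_m) andbT.
apply: lee_mul1Dgt0 => e e0.
rewrite -[in X in (_ <= X)%E](fmap_scale_right0 _ c_gt0) -limf_einf_comp.
by rewrite -limf_einf_pZl ?addr_gt0 //; apply: le_limf_einf; exact: near0_le_rescaled.
Qed.

End RescaledRatio.

Arguments limf_esup_rescaled {R a b m c}.
Arguments limf_einf_rescaled {R a b m c}.

Definition sepset {R : realType} {Z : Type} (rho : Z -> Z -> R) (eps : R) : set nat :=
  [set n | exists f : 'I_n -> Z, forall i j, i != j -> eps < rho (f i) (f j)].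

Section Separated.
Context {R : realType} {Z : Type} (rho : Z -> Z -> R).
Implicit Types (eps : R) (n B : nat).

Lemma sepnum_le {eps B} : (forall n, sepset rho eps n -> (n <= B)%N) ->
  (sepnum rho eps <= (B%:R)%:E)%E.
Proof.
by move=> HB; apply: ge_ereal_sup => _ [n Hn <-]; rewrite lee_fin ler_nat HB.
Qed.

Lemma sepnum_ge {eps n} : sepset rho eps n -> ((n%:R)%:E <= sepnum rho eps)%E.
Proof. by move=> Hn; apply: ereal_sup_ubound; exists n. Qed.

Lemma sepset1 eps (z : Z) : sepset rho eps 1.
Proof. by exists (fun _ => z) => i j; rewrite !ord1. Qed.

Lemma elog_sepnum_ge {eps n} : (0 < n)%N -> sepset rho eps n ->
  ((ln n%:R)%:E <= elog (sepnum rho eps))%E.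
Proof.
move=> n0 /sepnum_ge; case: (sepnum rho eps) => [s| |] //= ns; last by rewrite leey.
rewrite lee_fin in ns; rewrite lee_fin ler_ln ?posrE ?ltr0n //.
by apply: lt_le_trans ns; rewrite ltr0n.
Qed.

Lemma elog_sepnum_le {eps B} (z : Z) : (forall n, sepset rho eps n -> (n <= B)%N) ->
  (elog (sepnum rho eps) <= (ln B%:R)%:E)%E.
Proof.
move=> HB; have := sepnum_ge (sepset1 eps z); have := sepnum_le HB.
case: (sepnum rho eps) => [s| |] //=; rewrite !lee_fin => sB s1.
have s0 : 0 < s := lt_le_trans ltr01 s1.
by rewrite ler_ln ?posrE // (lt_le_trans s0 sB).
Qed.

Lemma sepset_card {T : finType} {eps} (phi : T -> Z) :
  (forall a b, a != b -> eps < rho (phi a) (phi b)) -> sepset rho eps #|T|.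
Proof.
move=> H; exists (fun i => phi (enum_val i)) => i j ij; apply: H.
by apply: contra ij => /eqP /enum_val_inj ->.
Qed.

Lemma sepset_le_card {T : finType} {eps} (code : Z -> T) :
  (forall p q, code p = code q -> rho p q <= eps) ->
  forall n, sepset rho eps n -> (n <= #|T|)%N.
Proof.
move=> H n [f Hf].
have inj : injective (fun i => code (f i)).
  move=> i j /H hij; apply/eqP; apply: contraTT hij => ij.
  by rewrite -ltNge; apply: Hf.
by have := leq_card _ inj; rewrite card_ord.
Qed.

End Separated.

Definition log_sepnum {R : realType} {Z : Type} (rho : Z -> Z -> R) (eps : R) : R :=
  ln (fine (sepnum rho eps)).

Section CompactMetric.
Context {R : realType} {X : Type} (d : X -> X -> R).
Hypothesis d_metric : is_metric d.
Hypothesis d_compact : dcompact d.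
Variable x0 : X.

Lemma d_ge0 x y : 0 <= d x y. Proof. by case: d_metric. Qed.
Lemma d_refl x : d x x = 0. Proof. by case: d_metric => _ [H _]; apply/H. Qed.
Lemma d_sym x y : d x y = d y x. Proof. by case: d_metric => _ [_ [H _]]. Qed.
Lemma d_tri x y z : d x z <= d x y + d y z. Proof. by case: d_metric => _ [_ [_ H]]. Qed.

Lemma dopen_dball x r : dopen d (dball d x r).
Proof.
move=> y /= hy; exists (r - d x y); first by rewrite subr_gt0.
by move=> z /= hz; apply: le_lt_trans (d_tri x y z) _; rewrite /dball /= in hz; lra.
Qed.

Lemma dcompact_finite_net {eta} : 0 < eta ->
  exists k (c : 'I_k -> X), forall x, exists j, d (c j) x < eta.
Proof.
move=> eta0; have [|k [c Hc]] := d_compact X (dball d ^~ eta) (dopen_dball ^~ eta).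
  by apply/seteqP; split => // y _; exists y => //; rewrite /dball /= d_refl.
exists k, c => x; have : (\bigcup_j dball d (c j) eta) x by rewrite Hc.
by case=> j _ hj; exists j.
Qed.

Lemma dbounded : exists2 D : R, 0 < D & forall x y, d x y <= D.
Proof.
have [k [c Hc]] := dcompact_finite_net ltr01.
pose M := \big[Num.max/0]_(j < k) \big[Num.max/0]_(j' < k) d (c j) (c j').
have M0 : 0 <= M.
  apply: (big_ind (fun x => 0 <= x)) => //= [u v hu hv|j _]; first by rewrite le_max hu.
  apply: (big_ind (fun x => 0 <= x)) => //= [u v hu hv|j' _]; first by rewrite le_max hu.
  exact: d_ge0.
exists (M + 2) => [|x y]; first lra.
have [j hj] := Hc x; have [j' hj'] := Hc y.
have hM : d (c j) (c j') <= M.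
  apply: le_trans (le_bigmax _ _ j).
  exact: (le_bigmax _ (fun j' => d (c j) (c j')) j').
have := d_tri x (c j) y; have := d_tri (c j) (c j') y.
by rewrite (d_sym x (c j)); lra.
Qed.

Lemma sepset_bounded {eta} : 0 < eta ->
  exists B : nat, forall n, sepset d eta n -> (n <= B)%N.
Proof.
move=> eta0; have [k [c Hc]] := @dcompact_finite_net (eta / 2) ltac:(lra).
exists k => n [f Hf]; have [g Hg] := boolp.choice (fun i => Hc (f i)).
suff /leq_card : injective g by rewrite !card_ord.
move=> i j gij; apply/eqP; apply: contraT => ij.
have := Hf i j ij; have := Hg i; have := Hg j; rewrite gij => h1 h2.
have := d_tri (f i) (c (g j)) (f j); rewrite (d_sym (f i) (c (g j))).
lra.
Qed.

Lemma maximal_separated {eta} : 0 < eta ->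
  exists N (Y : 'I_N -> X), [/\ (0 < N)%N,
    (forall i j, i != j -> eta < d (Y i) (Y j)),
    sepnum d eta = (N%:R)%:E &
    forall x, exists i, d x (Y i) <= eta].
Proof.
move=> eta0; have [B HB] := sepset_bounded eta0.
pose P n := `[< sepset d eta n >].
have Pex : exists n, P n by exists 1%N; apply/asboolP; exact: sepset1.
have Pub n : P n -> (n <= B)%N by move/asboolP; exact: HB.
case: (ex_maxnP Pex Pub) => N /asboolP [Y HY] Nmax.
have N0 : (0 < N)%N by apply: Nmax; apply/asboolP; exact: sepset1.
exists N, Y; split => //.
  apply/eqP; rewrite eq_le sepnum_ge; last by exists Y.
  by rewrite andbT; apply: sepnum_le => n Hn; apply: Nmax; apply/asboolP.
move=> x; apply: contrapT => /forallNP Hx.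
have far i : eta < d x (Y i) by rewrite ltNge; apply/negP => /(Hx i).
pose Y' i := if unlift ord_max i is Some j then Y j else x.
suff /Nmax : P N.+1 by rewrite ltnn.
apply/asboolP; exists Y' => i j; rewrite /Y'.
case: unliftP => [i' ->|->]; case: unliftP => [j' ->|->] //.
- by move=> ij; apply: HY; apply: contra ij => /eqP ->.
- by rewrite d_sym.
- by rewrite eqxx.
Qed.

Lemma log_sepnum_ge0 eta : 0 < eta -> 0 <= log_sepnum d eta.
Proof.
move=> eta0; have [N [_ [N0 _ sepN _]]] := maximal_separated eta0.
by rewrite /log_sepnum sepN /= ln_ge0 // ler1n.
Qed.

Lemma box_ratioE eta : 0 < eta ->
  box_ratio d eta = (`|ln eta|^-1 * log_sepnum d eta)%:E.
Proof.
move=> eta0; have [N [_ [_ _ sepN _]]] := maximal_separated eta0.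
by rewrite /box_ratio /log_sepnum sepN /= EFinM.
Qed.

End CompactMetric.

Section WeightedProduct.
Context {R : realType} {G : countType} {X : Type} (d : X -> X -> R) (alpha : G -> R).
Hypothesis alpha_gt0 : forall g, 0 < alpha g.
Hypothesis alpha_summable : (\esum_(g in [set: G]) (alpha g)%:E < +oo)%E.

Lemma sum_le_esum {s : seq G} : uniq s ->
  ((\sum_(g <- s) alpha g)%:E <= \esum_(g in [set: G]) (alpha g)%:E)%E.
Proof.
move=> us; rewrite -sumEFin fsbig_seq //; apply: ereal_sup_ubound.
by exists [set` s] => //; split => //; exact: finite_seq.
Qed.

Lemma esum_le_sum_bound {f : G -> R} {M : R} : (forall g, 0 <= f g) ->
  (forall s, uniq s -> \sum_(g <- s) f g <= M) ->
  (\esum_(g in [set: G]) (f g)%:E <= M%:E)%E.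
Proof.
move=> f0 H; apply: ge_ereal_sup => _ [J [finJ _] <-].
by rewrite fsbig_finite // sumEFin lee_fin; apply: H; exact: finmap.fset_uniq.
Qed.

Definition weight_sum : R := fine (\esum_(g in [set: G]) (alpha g)%:E).

Lemma weight_sumE : \esum_(g in [set: G]) (alpha g)%:E = weight_sum%:E.
Proof.
rewrite /weight_sum fineK // ge0_fin_numE //.
by apply: esum_ge0 => g _; rewrite lee_fin ltW.
Qed.

Lemma sum_le_weight_sum {s : seq G} : uniq s -> \sum_(g <- s) alpha g <= weight_sum.
Proof. by move=> us; rewrite -lee_fin -weight_sumE; exact: sum_le_esum. Qed.

Lemma weight_sum_ge0 : 0 <= weight_sum.
Proof. by have := @sum_le_weight_sum [::] erefl; rewrite big_nil. Qed.

Lemma small_tail (tau : R) : 0 < tau -> exists K : seq G, uniq K /\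
  forall s, uniq s -> \sum_(g <- s | g \notin K) alpha g <= tau.
Proof.
move=> tau0; have : ((weight_sum - tau)%:E < \esum_(g in [set: G]) (alpha g)%:E)%E.
  by rewrite weight_sumE lte_fin; lra.
move=> /ereal_sup_gt [_ [J [finJ _] <-]]; rewrite fsbig_finite // sumEFin lte_fin.
set K := finmap.enum_fset (fset_set J) => HK; exists K; split => [|s us].
  exact: finmap.fset_uniq.
pose s' := [seq g <- s | g \notin K].
have u' : uniq (K ++ s').
  rewrite cat_uniq finmap.fset_uniq filter_uniq // andbT /=.
  by apply/hasPn => g; rewrite mem_filter => /andP[].
by have := sum_le_weight_sum u'; rewrite big_cat /= /s' big_filter; lra.
Qed.

Hypothesis d_ge0 : forall x y, 0 <= d x y.
Variable D : R.
Hypothesis d_le : forall x y, d x y <= D.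
Hypothesis D_ge0 : 0 <= D.

Lemma prod_metric_le (x y : G -> X) (M : R) :
  (forall s, uniq s -> \sum_(g <- s) alpha g * d (x g) (y g) <= M) ->
  prod_metric alpha d x y <= M.
Proof.
move=> H; rewrite /prod_metric.
have := esum_le_sum_bound (fun g => mulr_ge0 (ltW (alpha_gt0 g)) (d_ge0 (x g) (y g))) H.
have : (0 <= \esum_(g in [set: G]) (alpha g * d (x g) (y g))%:E)%E.
  by apply: esum_ge0 => g _; rewrite lee_fin mulr_ge0 // ltW.
by case: (\esum_(g in _) _) => [r| |] //=; rewrite !lee_fin.
Qed.

Lemma prod_metric_ge (x y : G -> X) (g : G) :
  alpha g * d (x g) (y g) <= prod_metric alpha d x y.
Proof.
rewrite /prod_metric.
have : (\esum_(g in [set: G]) (alpha g * d (x g) (y g))%:E <= (D * weight_sum)%:E)%E.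
  apply: esum_le_sum_bound => [g'|s us]; first by rewrite mulr_ge0 // ltW.
  apply: le_trans (_ : \sum_(g <- s) D * alpha g <= _).
    by apply: ler_sum => g' _; rewrite mulrC ler_wpM2r // ltW.
  by rewrite -mulr_sumr ler_wpM2l ?sum_le_weight_sum.
have : ((alpha g * d (x g) (y g))%:E <=
         \esum_(g in [set: G]) (alpha g * d (x g) (y g))%:E)%E.
  apply: esum_ge; exists [set g]; first by split => //; exact: finite_set1.
  by rewrite fsbig_set1.
by case: (\esum_(g in _) _) => [r| |] //=; rewrite !lee_fin.
Qed.

Lemma prod_metric_le_split (K : seq G) (tau theta : R) (x y : G -> X) :
  0 <= theta ->
  (forall s, uniq s -> \sum_(g <- s | g \notin K) alpha g <= tau) ->
  (forall g, g \in K -> d (x g) (y g) <= theta) ->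
  prod_metric alpha d x y <= theta * weight_sum + D * tau.
Proof.
move=> theta0 HK Hx; apply: prod_metric_le => s us.
rewrite (bigID (fun g => g \in K)) /=; apply: lerD.
- apply: le_trans (_ : \sum_(g <- s | g \in K) theta * alpha g <= _).
    by apply: ler_sum => g gK; rewrite mulrC ler_wpM2r ?Hx // ltW.
  rewrite -mulr_sumr ler_wpM2l //; apply: le_trans (sum_le_weight_sum us).
  rewrite [X in _ <= X](bigID (fun g => g \in K)) /= lerDl.
  by apply: sumr_ge0 => g _; rewrite ltW.
- apply: le_trans (_ : \sum_(g <- s | g \notin K) D * alpha g <= _).
    by apply: ler_sum => g gK; rewrite mulrC ler_wpM2r // ltW.
  by rewrite -mulr_sumr ler_wpM2l // HK.
Qed.

End WeightedProduct.

Section Folner.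
Context {R : realType} {G : countType} (mul : G -> G -> G).

Lemma size_undup_allpairs_le (K F : seq G) :
  (size (undup [seq mul g h | g <- K, h <- F]) <=
   size F + \sum_(g <- K) symdiff_card mul g F)%N.
Proof.
pose T := F ++ flatten [seq [seq x <- map (mul g) F | x \notin F] | g <- K].
have sub : {subset undup [seq mul g h | g <- K, h <- F] <= T}.
  move=> z; rewrite mem_undup => /allpairsP [[g h] [gK hF ->]] /=.
  rewrite mem_cat; case: (boolP (mul g h \in F)) => //= nF.
  apply/flattenP; exists [seq x <- map (mul g) F | x \notin F]; first exact: map_f.
  by rewrite mem_filter nF map_f.
apply: leq_trans (uniq_leq_size (undup_uniq _) sub) _.
rewrite size_cat size_flatten /shape -map_comp sumnE big_map leq_add2l.
by apply: leq_sum => g _; rewrite /= size_filter leq_addr.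
Qed.

Variable F : nat -> seq G.
Hypothesis F_folner : folner (R := R) mul F.

Lemma folner_uniq n : uniq (F n). Proof. by case: F_folner => H _; case: (H n). Qed.

Lemma folner_size_gt0 n : (0 < size (F n))%N.
Proof. by case: F_folner => H _; case: (H n) => _; case: (F n). Qed.

Lemma folner_sum_symdiff (K : seq G) :
  (fun n => \sum_(g <- K) (symdiff_card mul g (F n))%:R / (size (F n))%:R : R) @ \oo
    --> (0 : R).
Proof.
elim: K => [|g K IH]; first by under eq_fun do rewrite big_nil; exact: cvg_cst.
under eq_fun do rewrite big_cons.
have cvg_g : (fun n => (symdiff_card mul g (F n))%:R / (size (F n))%:R : R) @ \oo
    --> (0 : R) by case: F_folner => _; apply.
have := cvgD cvg_g IH; rewrite addr0; exact.
Qed.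

Lemma folner_size_allpairs (K : seq G) (e : R) : 0 < e ->
  \forall n \near \oo, (size (undup [seq mul g h | g <- K, h <- F n]))%:R <=
                       (1 + e) * (size (F n))%:R :> R.
Proof.
move=> e0; move/cvgr_dist_lt: (folner_sum_symdiff K) => /(_ e e0).
apply: filterS => n; rewrite sub0r normrN => /(le_lt_trans (ler_norm _)).
have Fn0 : 0 < (size (F n))%:R :> R by rewrite ltr0n folner_size_gt0.
rewrite -mulr_suml ltr_pdivrMr // => sum_lt.
apply: le_trans (_ : (size (F n) + \sum_(g <- K) symdiff_card mul g (F n))%:R <= _).
  by rewrite ler_nat size_undup_allpairs_le.
by rewrite natrD natr_sum; lra.
Qed.

End Folner.

Arguments folner_uniq {R G mul F}.
Arguments folner_size_gt0 {R G mul F}.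
Arguments folner_size_allpairs {R G mul F}.

Section LimnEsup.
Context {R : realType}.
Local Open Scope ereal_scope.

Lemma limn_esup_ge (u : nat -> \bar R) (y : \bar R) :
  (forall n, y <= u n) -> y <= limn_esup u.
Proof.
move=> H; apply: le_ereal_inf_tmp => _ [V [N _ HV] <-].
by apply: le_trans (H N) _; apply: ereal_sup_ubound; exists N => //; apply: HV => /=.
Qed.

Lemma limn_esup_le (u : nat -> \bar R) (z : \bar R) :
  (\forall n \near \oo, u n <= z) -> limn_esup u <= z.
Proof.
move=> H; apply: le_trans (ereal_inf_lbound _) _; first by exists [set n | u n <= z].
by apply: ge_ereal_sup => _ [n hn <-].
Qed.

End LimnEsup.

Lemma ln_natX {R : realType} (N k : nat) : (0 < N)%N ->
  ln ((N ^ k)%:R : R) = k%:R * ln N%:R.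
Proof. by move=> N0; rewrite natrX lnXn ?ltr0n // mulr_natl. Qed.

Section FullShift.
Context {R : realType} {G : countType} (mul : G -> G -> G) (one : G).
Hypothesis mul1g : left_id one mul.
Context {X : pointedType} (d : X -> X -> R) (alpha : G -> R).
Hypothesis d_metric : is_metric d.
Hypothesis d_compact : dcompact d.
Hypothesis alpha_gt0 : forall g, 0 < alpha g.
Hypothesis alpha_one : alpha one = 1.
Hypothesis alpha_summable : (\esum_(g in [set: G]) (alpha g)%:E < +oo)%E.
Variable D : R.
Hypothesis d_le : forall x y, d x y <= D.
Hypothesis D_gt0 : 0 < D.

Local Notation rhoF_shift := (rhoF (gshift mul) (prod_metric alpha d)).
Local Notation A := (weight_sum alpha).

Lemma rhoF_ge_coord {F : seq G} (p q : G -> X) {h} :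
  h \in F -> d (p h) (q h) <= rhoF_shift F p q.
Proof.
move=> hF; have := prod_metric_ge d alpha alpha_gt0 alpha_summable (d_ge0 d d_metric) D
  d_le (ltW D_gt0) (gshift mul h p) (gshift mul h q) one.
rewrite alpha_one mul1r {1 2}/gshift !mul1g => /le_trans; apply.
exact: (le_bigmax_seq 0 h xpredT
  (fun h => prod_metric alpha d (gshift mul h p) (gshift mul h q)) hF).
Qed.

Lemma sepset_rhoF_pow {F : seq G} {eps N} {Y : 'I_N -> X} : uniq F ->
  (forall i j, i != j -> eps < d (Y i) (Y j)) ->
  sepset (rhoF_shift F) eps (N ^ size F)%N.
Proof.
move=> uF sepY; pose T := {ffun seq_sub F -> 'I_N}.
pose phi (t : T) (g : G) := oapp (fun s => Y (t s)) (point : X) (insub g).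
have -> : (N ^ size F)%N = #|T| by rewrite card_ffun card_ord card_seq_sub.
apply: (sepset_card (rhoF_shift F) phi) => t t'.
move=> /eqP neq_tt'; have [s ts] : exists s, t s != t' s.
  apply: contrapT => /forallNP H; apply: neq_tt'; apply/ffunP => s.
  by apply/eqP; apply: contraT => h; case: (H s).
apply: (lt_le_trans _ (rhoF_ge_coord (phi t) (phi t') (ssvalP s))).
by rewrite /phi valK /=; apply: sepY.
Qed.

(* Code a point by the cells of an [eta]-net containing its coordinates on
   [K F]; points with the same code are [eps]-close for every translate by [F]. *)
Lemma sepset_rhoF_le {F K : seq G} {eps eta tau N} {Y : 'I_N -> X} :
  0 <= eta -> 0 <= tau ->
  (forall x, exists i, d x (Y i) <= eta) ->
  (forall s, uniq s -> \sum_(g <- s | g \notin K) alpha g <= tau) ->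
  2 * eta * A + D * tau <= eps ->
  forall n, sepset (rhoF_shift F) eps n ->
    (n <= N ^ size (undup [seq mul g h | g <- K, h <- F]))%N.
Proof.
move=> eta0 tau0 net tailK budget.
set S := undup [seq mul g h | g <- K, h <- F].
have [cell cellP] := boolp.choice net.
have -> : (N ^ size S)%N = #|{ffun seq_sub S -> 'I_N}|.
  by rewrite card_ffun card_ord card_seq_sub // undup_uniq.
pose code (p : G -> X) := [ffun s : seq_sub S => cell (p (val s))].
apply: (sepset_le_card (rhoF_shift F) code).
move=> p q cpq; rewrite /rhoF big_seq; apply: bigmax_le => [|h hF].
  apply: le_trans budget; rewrite addr_ge0 ?mulr_ge0 ?(ltW D_gt0) //.
  exact: weight_sum_ge0.
apply: le_trans budget; apply: (prod_metric_le_split d alpha alpha_gt0 alpha_summable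
  (d_ge0 d d_metric) D d_le (ltW D_gt0) K tau (2 * eta) _ _ _ tailK).
  by rewrite mulr_ge0.
move=> g gK; have hS : mul g h \in S by rewrite mem_undup; apply: allpairs_f.
have := congr1 (fun f : {ffun seq_sub S -> 'I_N} => f (SeqSub hS)) cpq.
rewrite !ffunE /gshift /= => same_cell.
have := cellP (p (mul g h)); have := cellP (q (mul g h)); rewrite same_cell => h1 h2.
have := d_tri d d_metric (p (mul g h)) (Y (cell (q (mul g h)))) (q (mul g h)).
by rewrite (d_sym d d_metric (Y _)); lra.
Qed.

(* With [eta = net_scale * eps] and [tau = eps / (2 * D)] both terms of the
   budget in [sepset_rhoF_le] equal [eps / 2]. *)
Definition net_scale : R := (4 * A)^-1.

Lemma weight_sum_ge1 : 1 <= A.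
Proof.
have := @sum_le_weight_sum _ _ _ alpha_gt0 alpha_summable [:: one] erefl.
by rewrite big_seq1 alpha_one.
Qed.

Lemma net_scale_gt0 : 0 < net_scale.
Proof. by rewrite invr_gt0; have := weight_sum_ge1; lra. Qed.

Lemma net_scale_lt1 : net_scale < 1.
Proof. by rewrite invf_lt1; have := weight_sum_ge1; lra. Qed.

Variable F : nat -> seq G.
Hypothesis F_folner : folner (R := R) mul F.

Local Notation mdim_ratio_shift := (mdim_ratio (gshift mul) (prod_metric alpha d) F).

Lemma box_ratio_le_mdim_ratio eps : 0 < eps -> (box_ratio d eps <= mdim_ratio_shift eps)%E.
Proof.
move=> eps0.
have [N [Y [N0 sepY sepN _]]] := maximal_separated d d_metric d_compact point eps0.
rewrite /box_ratio /mdim_ratio sepN /=; apply: lee_wpmul2l.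
  by rewrite lee_fin invr_ge0.
apply: limn_esup_ge => n; have Fn0 : 0 < (size (F n))%:R :> R.
  by rewrite ltr0n (folner_size_gt0 F_folner).
have NF0 : (0 < N ^ size (F n))%N by rewrite expn_gt0 N0.
have := elog_sepnum_ge _ NF0 (sepset_rhoF_pow (folner_uniq F_folner n) sepY).
rewrite ln_natX // => /(lee_wpmul2l (x := ((size (F n))%:R^-1)%:E)).
rewrite -EFinM mulrA mulVf ?gt_eqF // mul1r; apply.
by rewrite lee_fin invr_ge0 ltW.
Qed.

Lemma mdim_ratio_le_log_sepnum eps : 0 < eps ->
  (mdim_ratio_shift eps <= (`|ln eps|^-1 * log_sepnum d (net_scale * eps))%:E)%E.
Proof.
move=> eps0; have eta0 : 0 < net_scale * eps by rewrite mulr_gt0 ?net_scale_gt0.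
have [N [Y [N0 _ sepN net]]] := maximal_separated d d_metric d_compact point eta0.
have tau0 : 0 < eps / (2 * D) by rewrite divr_gt0 // mulr_gt0.
have [K [_ tailK]] := small_tail alpha alpha_gt0 alpha_summable _ tau0.
have budget : 2 * (net_scale * eps) * A + D * (eps / (2 * D)) <= eps.
  rewrite /net_scale le_eqVlt; apply/orP; left; apply/eqP.
  by field; rewrite gt_eqF // gt_eqF //; apply: lt_le_trans ltr01 weight_sum_ge1.
have lnN_ge0 : 0 <= ln (N%:R : R) by rewrite ln_ge0 // ler1n.
rewrite /mdim_ratio /log_sepnum sepN /= EFinM; apply: lee_wpmul2l.
  by rewrite lee_fin invr_ge0.
apply: lee_mul1Dgt0 => e e0; rewrite -EFinM; apply: limn_esup_le.
move: (folner_size_allpairs F_folner K _ e0); apply: filterS => n KFn.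
have Fn0 : 0 < (size (F n))%:R :> R by rewrite ltr0n (folner_size_gt0 F_folner).
have := elog_sepnum_le _ point
  (sepset_rhoF_le (F := F n) (ltW eta0) (ltW tau0) net tailK budget).
rewrite ln_natX // => /(lee_wpmul2l (x := ((size (F n))%:R^-1)%:E)) /le_trans; apply.
  by rewrite lee_fin invr_ge0 ltW.
by rewrite -EFinM lee_fin mulrA ler_wpM2r // mulrC ler_pdivrMr.
Qed.

End FullShift.

Theorem mainTheorem6 (R : realType)
  (G : countType) (mul : G -> G -> G) (one : G) (inv : G -> G)
  (mulA : associative mul) (mul1g : left_id one mul)
  (mulVg : left_inverse one inv mul)
  (G_amenable : amenable (R := R) mul)
  (X : pointedType) (d : X -> X -> R)
  (d_metric : is_metric d) (X_compact : dcompact d)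
  (alpha : G -> R) (alpha_pos : forall g, 0 < alpha g) (alpha_one : alpha one = 1)
  (alpha_summable : (\esum_(g in [set: G]) (alpha g)%:E < +oo)%E)
  (HC : condition_C (Z := G -> X) (gshift mul) (prod_metric alpha d)) :
  forall F : nat -> seq G, folner (R := R) mul F ->
    upper_mdimM (gshift mul) (prod_metric alpha d) F = upper_box_dim d /\
    lower_mdimM (gshift mul) (prod_metric alpha d) F = lower_box_dim d.
Proof.
move=> F F_folner; have [D D_gt0 d_le] := dbounded d d_metric X_compact.
have c01 : 0 < net_scale alpha < 1.
  by rewrite (net_scale_gt0 one) ?(net_scale_lt1 one).
have a_ge0 := log_sepnum_ge0 d d_metric X_compact point.
have bE := box_ratioE d d_metric X_compact point.
have b_le_m x (x01 : 0 < x < 1) := box_ratio_le_mdim_ratio mul one mul1g d alpha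
  d_metric X_compact alpha_pos alpha_one alpha_summable D d_le D_gt0 F F_folner x
  (andP x01).1.
have m_le x (x01 : 0 < x < 1) := mdim_ratio_le_log_sepnum mul one d alpha
  d_metric X_compact alpha_pos alpha_one alpha_summable D d_le D_gt0 F F_folner x
  (andP x01).1.
split; [exact: (limf_esup_rescaled c01 a_ge0 bE b_le_m m_le) |
        exact: (limf_einf_rescaled c01 a_ge0 bE b_le_m m_le)].
Qed.
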